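(* Let $G$ be a finite non-singular graph. Then $\mathcal{A}_{RW}(G)\cong\mathcal{A}(G)$ (as algebras) if and only if $G$ is a regular graph or a biregular graph. Moreover, if $\mathcal{A}_{RW}(G)\not\cong\mathcal{A}(G)$, then the only algebra homomorphism between them is the null map.
   Context: Graphs are simple (no loops or multiple edges) and connected; here $G=(V,E)$ has finitely many vertices $V=\{1,\dots,n\}$. The adjacency matrix is $A=(a_{ij})$ with $a_{ij}=1$ if $i,j$ are neighbors and $0$ otherwise; $G$ is non-singular if $\det A\neq 0$. $\deg(i)$ is the number of neighbors of $i$. $G$ is $d$-regular if every vertex has degree $d$, and regular if it is $d$-regular for some $d$. $G$ is bipartite if $V$ splits into disjoint $V_1,V_2$ with every edge joining $V_1$ to $V_2$; $G$ is biregular if it is bipartite with such a bipartition in which any two vertices on the same side have the same degree. An evolution algebra over $\mathbb{R}$ is an algebra with a basis $\{e_i\}$ (natural basis) such that $e_i\cdot e_j=0$ for $i\ne j$ and $e_i\cdot e_i=\sum_k c_{ik}e_k$. $\mathcal{A}(G)$ has natural basis $\{e_i:i\in V\}$ with $e_i\cdot e_i=\sum_{k\in V}a_{ik}e_k$; $\mathcal{A}_{RW}(G)$ has natural basis $\{e_i:i\in V\}$ with $e_i\cdot e_i=\sum_{k\in V}\frac{a_{ik}}{\deg(i)}e_k$; in both, $e_i\cdot e_j=0$ for $i\neq j$. An isomorphism is a bijective linear map $f$ with $f(u\cdot v)=f(u)\cdot f(v)$. *)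

From HB Require Import structures.
From mathcomp Require Import all_boot all_order all_algebra.
From mathcomp Require Import reals.
Set Implicit Arguments. Unset Strict Implicit. Unset Printing Implicit Defensive.
Import Order.TTheory GRing.Theory Num.Theory.
Local Open Scope ring_scope.

Definition simple_graph n (e : rel 'I_n) : Prop :=
  symmetric e /\ irreflexive e.

Definition connected_graph n (e : rel 'I_n) : Prop :=
  forall i j : 'I_n, connect e i j.

Definition deg n (e : rel 'I_n) (i : 'I_n) : nat := #|[set j | e i j]|.

Definition adjmx (R : nzRingType) n (e : rel 'I_n) : 'M[R]_n :=
  \matrix_(i, j) (e i j)%:R.

Definition rwmx (R : fieldType) n (e : rel 'I_n) : 'M[R]_n :=
  \matrix_(i, j) ((e i j)%:R / (deg e i)%:R).

Definition nonsingular_graph (R : nzRingType) n (e : rel 'I_n) : Prop :=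
  \det (adjmx R e) != 0.

Definition regular_graph n (e : rel 'I_n) : Prop :=
  exists d : nat, forall i, deg e i = d.

Definition biregular_graph n (e : rel 'I_n) : Prop :=
  exists V1 : {set 'I_n},
    (forall i j, e i j -> (i \in V1) != (j \in V1)) /\
    (forall i j, (i \in V1) = (j \in V1) -> deg e i = deg e j).

(* The evolution algebra with structure matrix C on R^n (row vectors in
   the natural basis e_i): e_i e_j = 0 (i<>j), e_i e_i = sum_k C i k e_k.
   Hence (u v)_k = sum_i u_i v_i C_ik. *)
Definition evo_mul (R : nzRingType) n (C : 'M[R]_n) (u v : 'rV[R]_n) : 'rV[R]_n :=
  \row_k \sum_i u 0 i * v 0 i * C i k.

Definition evo_hom (R : nzRingType) n (C1 C2 : 'M[R]_n) (f : 'rV[R]_n -> 'rV[R]_n) : Prop :=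
  (forall (a : R) u v, f (a *: u + v) = a *: f u + f v) /\
  (forall u v, f (evo_mul C1 u v) = evo_mul C2 (f u) (f v)).

Definition evo_iso (R : nzRingType) n (C1 C2 : 'M[R]_n) : Prop :=
  exists f : 'rV[R]_n -> 'rV[R]_n, bijective f /\ evo_hom C1 C2 f.

From mathcomp Require Import all_boot all_order all_algebra.
From mathcomp Require Import reals.
From mathcomp Require Import ring lra fingroup perm.
From Stdlib Require Import FunctionalExtensionality.
Set Implicit Arguments. Unset Strict Implicit. Unset Printing Implicit Defensive.
Import Order.TTheory GRing.Theory Num.Theory.
Local Open Scope ring_scope.

(* A homomorphism f between evolution algebras with structure matrices C1, C2
   satisfies f(e_i) f(e_j) = f(e_i e_j) = 0 for i <> j; when C2 is invertible
   this forces the images of the basis vectors to have disjoint supports.  So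
   either some f(e_i) vanishes, and then all do by connectedness, or
   f(e_i) = lam_i e_(s i) for a permutation s, and f(e_i^2) = f(e_i)^2 reads
   C1_ij lam_j = lam_i^2 C2_(s i)(s j).  For C1, C2 the random-walk and adjacency
   matrices this gives lam_j = deg(i)^(+-1) lam_i^2 along every edge ij, and
   going back and forth along two edges ux, uy yields deg x = deg y.  Conversely
   when all neighbours of each vertex have the same degree, the relation holds
   with s = 1 and lam_i the cube root of 1 / (deg(i)^2 deg(neighbour of i)). *)

Lemma connect_preserved (T : finType) (e : rel T) (P : pred T) :
  (forall x y, e x y -> P x -> P y) -> forall x y, connect e x y -> P x -> P y.
Proof.
move=> eP x y /connectP[p]; elim: p x => [|z p IHp] x /=; first by move=> _ ->.
by case/andP=> exz pz y_last Px; apply: IHp pz y_last (eP _ _ exz Px).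
Qed.

Lemma monomial_of_disjoint_rows (R : idomainType) n (M : 'M[R]_n) :
  (forall i j k, i != j -> M i k * M j k = 0) -> (forall i, exists k, M i k != 0) ->
  exists s : {perm 'I_n}, forall i k, (M i k != 0) = (k == s i).
Proof.
move=> disj nz_row.
have M_xchoose i : M i (xchoose (nz_row i)) != 0 := xchooseP (nz_row i).
have s_inj : injective (fun i => xchoose (nz_row i)).
  move=> i j eq_ij; apply/eqP/negPn/negP => /(disj _ _ (xchoose (nz_row i)))/eqP.
  by rewrite {2}eq_ij mulf_eq0 (negPf (M_xchoose i)) (negPf (M_xchoose j)).
exists (perm s_inj) => i k; rewrite permE.
have [j ->] : exists j, k = xchoose (nz_row j).
  by exists ((perm s_inj)^-1 k)%g; rewrite -[LHS](permKV (perm s_inj)) permE.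
rewrite (inj_eq s_inj); have [-> | ne_ji] := eqVneq j i; first exact: M_xchoose.
move/eqP: (disj _ _ (xchoose (nz_row j)) ne_ji).
by rewrite mulf_eq0 (negPf (M_xchoose j)) /= => /eqP ->; rewrite eqxx.
Qed.

Lemma evo_mulE (R : nzRingType) n (C : 'M[R]_n) u v :
  evo_mul C u v = \row_k (u 0 k * v 0 k) *m C.
Proof. by apply/rowP => k; rewrite !mxE; apply: eq_bigr => i _; rewrite mxE. Qed.

Lemma evo_mul_delta (R : nzRingType) n (C : 'M[R]_n) i j :
  evo_mul C (delta_mx 0 i) (delta_mx 0 j) = if i == j then row i C else 0.
Proof.
apply/rowP => k; rewrite !mxE (bigD1 i) //= big1 => [|l /negPf ne_li]; last first.
  by rewrite !mxE ne_li andbF !mul0r.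
by rewrite !mxE !eqxx addr0 mul1r; case: eqVneq => _; rewrite !mxE ?mul1r ?mul0r.
Qed.

Section EvolutionHom.
Variables (R : fieldType) (n : nat) (C1 C2 : 'M[R]_n) (f : 'rV[R]_n -> 'rV[R]_n).
Hypotheses (f_hom : evo_hom C1 C2 f) (C2_unit : C2 \in unitmx).

Let M : 'M[R]_n := \matrix_i f (delta_mx 0 i).

Lemma evo_hom0 : f 0 = 0.
Proof.
have := f_hom.1 1 0 0; rewrite !scale1r addr0 => f00.
by apply: (addrI (f 0)); rewrite addr0 -f00.
Qed.

Lemma evo_hom_mx u : f u = u *m M.
Proof.
rewrite mulmx_sum_row {1}(row_sum_delta u).
elim/big_rec2: _ => [|i v w _ <-]; first exact: evo_hom0.
by rewrite f_hom.1 rowK.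
Qed.

Lemma hom_mx_disjoint i j k : i != j -> M i k * M j k = 0.
Proof.
move=> ne_ij; have := f_hom.2 (delta_mx 0 i) (delta_mx 0 j).
rewrite evo_mul_delta (negPf ne_ij) evo_hom0 evo_mulE => /esym.
move/(congr1 (mulmx^~ (invmx C2))); rewrite mulmxK // mul0mx => /rowP/(_ k).
by rewrite /M !mxE.
Qed.

Lemma hom_mx_sqr i l : \sum_k C1 i k * M k l = \sum_k M i k ^+ 2 * C2 k l.
Proof.
have := f_hom.2 (delta_mx 0 i) (delta_mx 0 i).
rewrite evo_mul_delta eqxx evo_hom_mx evo_mulE => /rowP/(_ l); rewrite !mxE => sqr.
by apply: etrans (etrans _ sqr) _; apply: eq_bigr => k _; rewrite /M !mxE ?expr2.
Qed.

Lemma hom_mx_row_eq0 i k : C1 i k != 0 -> row i M = 0 -> row k M = 0.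
Proof.
move=> C1ik Mi0; apply/rowP => l; rewrite mxE [RHS]mxE; apply/eqP/negP => /negP Mkl.
have Mi_eq0 m : M i m = 0 by have /rowP/(_ m) := Mi0; rewrite !mxE.
have : \sum_m C1 i m * M m l = C1 i k * M k l.
  rewrite (bigD1 k) //= big1 ?addr0 // => m ne_mk.
  have /eqP := hom_mx_disjoint l ne_mk.
  by rewrite mulf_eq0 (negPf Mkl) orbF => /eqP ->; rewrite mulr0.
rewrite hom_mx_sqr big1 => [/esym/eqP | m _]; last by rewrite Mi_eq0 expr0n mul0r.
by rewrite mulf_eq0 (negPf C1ik) (negPf Mkl).
Qed.

Lemma evo_hom_eq0_or_monomial :
  (forall i j, connect [rel i k | C1 i k != 0] i j) ->
  f = (fun _ => 0) \/ exists (s : {perm 'I_n}) (lam : 'I_n -> R),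
    (forall i, lam i != 0) /\ forall i j, C1 i j * lam j = lam i ^+ 2 * C2 (s i) (s j).
Proof.
move=> conn; have [nz_row | /forallPn[i0 /existsPn M_i0]] :=
  boolP [forall i, exists k, M i k != 0].
  right; have [s Ms] : exists s : {perm 'I_n}, forall i k, (M i k != 0) = (k == s i).
    apply: monomial_of_disjoint_rows => [|i]; first exact: hom_mx_disjoint.
    exact/existsP/(forallP nz_row).
  have M_off i k : k != s i -> M i k = 0 by rewrite -Ms => /negPn/eqP.
  exists s, (fun i => M i (s i)); split => [i | i j]; first by rewrite Ms.
  have := hom_mx_sqr i (s j).
  rewrite (bigD1 j) //= big1 => [|k ne_kj]; last first.
    by rewrite M_off ?mulr0 // (inj_eq perm_inj) eq_sym.
  rewrite (bigD1 (s i)) //= big1 => [|k ne_k]; last by rewrite M_off ?expr0n ?mul0r.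
  by rewrite !addr0.
left; have M_row0 i : row i M = 0.
  apply/eqP; apply: (connect_preserved (P := fun j => row j M == 0) _ (conn i0 i)).
    by move=> x y /= C1xy /eqP /(hom_mx_row_eq0 C1xy) ->.
  by apply/eqP/rowP => k; have := M_i0 k; rewrite !mxE negbK => /eqP.
have M0 : M = 0 by apply/row_matrixP => i; rewrite M_row0 row0.
by apply: functional_extensionality => u; rewrite evo_hom_mx M0 mulmx0.
Qed.

End EvolutionHom.

Lemma evo_iso_scale (R : fieldType) n (C1 C2 : 'M[R]_n) (lam : 'I_n -> R) :
  (forall i, lam i != 0) -> (forall i j, C1 i j * lam j = lam i ^+ 2 * C2 i j) ->
  evo_iso C1 C2.
Proof.
move=> lam_nz scale; exists (fun u => \row_k (u 0 k * lam k)); split.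
  apply: (@Bijective _ _ _ (fun u : 'rV_n => \row_k (u 0 k / lam k))) => u.
    by apply/rowP => k; rewrite !mxE mulfK.
  by apply/rowP => k; rewrite !mxE divfK.
split=> [a u v | u v]; apply/rowP => l; rewrite !mxE; first by ring.
rewrite mulr_suml; apply: eq_bigr => i _; rewrite -[_ * lam l]mulrA scale !mxE.
by ring.
Qed.

Lemma exists_pos_cbrt (R : rcfType) (y : R) : 0 < y -> exists2 x : R, 0 < x & x ^+ 3 = y.
Proof.
move=> y_gt0; have [||x /andP[x_ge0 _] /rootP] := @poly_ivt R ('X^3 - y%:P) 0 (1 + y).
- lra.
- rewrite !hornerE expr0n /= sub0r oppr_le0 (ltW y_gt0) /= subr_ge0.
  have : 1 + y <= (1 + y) ^+ 3 by rewrite -[leLHS]expr1 ler_eXn2l //; lra.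
  lra.
rewrite !hornerE => /eqP; rewrite subr_eq0 => /eqP x3.
exists x => //; rewrite lt_neqAle x_ge0 andbT; apply: contraTneq y_gt0 => x0.
by rewrite -x3 -x0 expr0n ltxx.
Qed.

Definition uniform_nbr_deg n (e : rel 'I_n) : Prop :=
  forall u v w, e u v -> e u w -> deg e v = deg e w.

(* lam_u = w_v lam_v^2 = w_v w_u^2 lam_u^4, so w_v = (w_u^2 lam_u^3)^-1
   for every neighbour v of u. *)
Lemma nbr_weight_uniform (R : fieldType) n (e : rel 'I_n) (w lam : 'I_n -> R) :
  symmetric e -> (forall i, lam i != 0) ->
  (forall i j, e i j -> lam j = w i * lam i ^+ 2) ->
  forall u v x, e u v -> e u x -> w v = w x.
Proof.
move=> sym lam_nz edge u.
have inv_nbr v : e u v -> w v * (w u ^+ 2 * lam u ^+ 3) = 1.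
  move=> euv; have lam_u := edge v u (etrans (sym v u) euv).
  rewrite (edge u v euv) in lam_u.
  by apply: (mulfI (lam_nz u)); rewrite mulr1 [RHS]lam_u; ring.
move=> v x euv eux; have c_nz : w u ^+ 2 * lam u ^+ 3 != 0.
  by apply: contra_eq_neq (inv_nbr v euv) => ->; rewrite mulr0 eq_sym oner_neq0.
by apply: (mulIf c_nz); rewrite !inv_nbr.
Qed.

Lemma deg_perm_auto n (e : rel 'I_n) (s : {perm 'I_n}) :
  (forall i j, e (s i) (s j) = e i j) -> forall i, deg e (s i) = deg e i.
Proof.
move=> auto i; rewrite /deg -(card_preimset _ (@perm_inj _ s)).
by apply: eq_card => j; rewrite !inE auto.
Qed.

Section NbrDeg.
Variables (n : nat) (e : rel 'I_n).

Lemma regular_or_biregular_uniform :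
  regular_graph e \/ biregular_graph e -> uniform_nbr_deg e.
Proof.
move=> [[d deg_d] | [V1 [bipart same_deg]]] u v w euv euw; first by rewrite !deg_d.
apply: same_deg; move: (bipart _ _ euv) (bipart _ _ euw).
by case: (u \in V1); case: (v \in V1); case: (w \in V1).
Qed.

(* Along an edge ij the pair (degree, common degree of the neighbours) is
   swapped, so by connectedness it takes at most the two values (a, b), (b, a). *)
Lemma uniform_regular_or_biregular : symmetric e -> connected_graph e ->
  (forall i, exists j, e i j) -> uniform_nbr_deg e -> regular_graph e \/ biregular_graph e.
Proof.
move=> sym conn has_nbr unif.
have [v0 _ | no_vertex] := pickP (@predT 'I_n); last first.
  by left; exists 0%N => i; have := no_vertex i.
pose nd i := deg e (xchoose (has_nbr i)).
have nd_nbr i j : e i j -> deg e j = nd i.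
  by move=> eij; apply: unif eij (xchooseP (has_nbr i)).
pose a := deg e v0; pose b := nd v0.
pose I i := ((deg e i == a) && (nd i == b)) || ((deg e i == b) && (nd i == a)).
have I_all i : I i.
  apply: (connect_preserved (P := I) _ (conn v0 i)); last by rewrite /I !eqxx.
  move=> x y exy; have eyx : e y x by rewrite sym.
  rewrite /I (nd_nbr x y exy) -(nd_nbr y x eyx).
  by case/orP=> /andP[/eqP-> /eqP->]; rewrite !eqxx ?orbT.
have [ab | ab] := eqVneq a b.
  by left; exists a => i; have := I_all i; rewrite /I -ab orbb => /andP[/eqP].
have deg_b k : deg e k != a -> deg e k = b.
  by case/orP: (I_all k) => /andP[/eqP-> _] //; rewrite eqxx.
right; exists [set i | deg e i == a]; split=> i j; rewrite !inE.
  move=> eij; rewrite (nd_nbr i j eij); have ba : b != a by rewrite eq_sym.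
  by case/orP: (I_all i) => /andP[/eqP-> /eqP->]; rewrite eqxx (negPf ba).
have [-> /esym/eqP -> // | ni /esym/negbT nj] := eqVneq (deg e i) a.
by rewrite (deg_b i ni) (deg_b j nj).
Qed.

End NbrDeg.

Section Graph.
Variables (R : numFieldType) (n : nat) (e : rel 'I_n).

Lemma deg_gt0 i j : e i j -> (0 < deg e i)%N.
Proof. by move=> eij; apply/card_gt0P; exists j; rewrite inE. Qed.

Lemma degR_neq0 i j : e i j -> (deg e i)%:R != 0 :> R.
Proof. by move/deg_gt0; rewrite pnatr_eq0 -lt0n. Qed.

Lemma adjmx_neq0 i j : (adjmx R e i j != 0) = e i j.
Proof. by rewrite mxE; case: (e i j); rewrite ?oner_neq0 ?eqxx. Qed.

Lemma rwmx_neq0 i j : (rwmx R e i j != 0) = e i j.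
Proof.
rewrite mxE; case eij: (e i j); last by rewrite mul0r eqxx.
by rewrite mul1r invr_neq0 // (degR_neq0 eij).
Qed.

Lemma rwmxE : rwmx R e = diag_mx (\row_i (deg e i)%:R^-1) *m adjmx R e.
Proof. by rewrite mul_diag_mx; apply/matrixP => i j; rewrite !mxE mulrC. Qed.

Hypothesis nonsing : nonsingular_graph R e.

Lemma nbr_of_nonsingular i : exists j, e i j.
Proof.
apply/existsP; apply: contraLR nonsing; rewrite negb_exists => /forallP no_nbr.
rewrite negbK (expand_det_row _ i) big1 // => j _.
by rewrite mxE (negPf (no_nbr j)) mul0r.
Qed.

Lemma adjmx_unit : adjmx R e \in unitmx.
Proof. by rewrite unitmxE unitfE. Qed.

Lemma rwmx_unit : rwmx R e \in unitmx.
Proof.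
rewrite rwmxE unitmxE unitfE det_mulmx mulf_neq0 // det_diag.
apply/prodf_neq0 => i _; rewrite mxE invr_eq0.
by have [j /degR_neq0] := nbr_of_nonsingular i.
Qed.

Hypotheses (sym : symmetric e) (conn : connected_graph e).

Lemma rw_adj_hom_eq0_or_uniform f : evo_hom (rwmx R e) (adjmx R e) f ->
  f = (fun _ => 0) \/ uniform_nbr_deg e.
Proof.
move=> f_hom; have conn_rw i j : connect [rel i k | rwmx R e i k != 0] i j.
  by rewrite (eq_connect (e' := e) rwmx_neq0); apply: conn.
have [-> | [s [lam [lam_nz scale]]]] := evo_hom_eq0_or_monomial f_hom adjmx_unit conn_rw.
  by left.
have edge i j : e i j -> lam j = (deg e i)%:R * lam i ^+ 2.
  move=> eij; have := scale i j; rewrite !mxE eij mul1r.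
  case: (e (s i) (s j)) => /=; last first.
    rewrite mulr0 => /eqP; rewrite mulf_eq0 invr_eq0.
    by rewrite (negPf (degR_neq0 eij)) (negPf (lam_nz j)).
  by rewrite mulr1 => <-; rewrite mulrA divff ?mul1r // (degR_neq0 eij).
right=> u v x euv eux; apply/eqP; rewrite -(eqr_nat R); apply/eqP.
exact: (nbr_weight_uniform sym lam_nz edge euv eux).
Qed.

Lemma adj_rw_hom_eq0_or_uniform f : evo_hom (adjmx R e) (rwmx R e) f ->
  f = (fun _ => 0) \/ uniform_nbr_deg e.
Proof.
move=> f_hom; have conn_adj i j : connect [rel i k | adjmx R e i k != 0] i j.
  by rewrite (eq_connect (e' := e) adjmx_neq0); apply: conn.
have [-> | [s [lam [lam_nz scale]]]] := evo_hom_eq0_or_monomial f_hom rwmx_unit conn_adj.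
  by left.
have s_auto i j : e (s i) (s j) = e i j.
  move/(congr1 (fun x => x != 0)): (scale i j).
  by rewrite !mulf_eq0 !negb_or adjmx_neq0 rwmx_neq0 !lam_nz andbT /= => ->.
have edge i j : e i j -> lam j = (deg e i)%:R^-1 * lam i ^+ 2.
  by move=> eij; have := scale i j; rewrite !mxE s_auto eij deg_perm_auto // !mul1r mulrC.
right=> u v x euv eux; apply/eqP; rewrite -(eqr_nat R); apply/eqP/invr_inj.
exact: (nbr_weight_uniform sym lam_nz edge euv eux).
Qed.

Lemma rw_adj_iso_uniform : evo_iso (rwmx R e) (adjmx R e) -> uniform_nbr_deg e.
Proof.
move=> [f [f_bij f_hom]]; have [f0 | //] := rw_adj_hom_eq0_or_uniform f_hom.
move=> u; have /rowP/(_ u) : delta_mx 0 u = 0 :> 'rV[R]_n.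
  by apply: (bij_inj f_bij); rewrite f0.
by rewrite !mxE !eqxx => /eqP; rewrite oner_eq0.
Qed.

End Graph.

(* Cubing lam_l = deg(i) lam_i^2 turns it into an identity between the chosen
   cubes, because uniformity gives deg(nbr l) = deg i and deg(nbr i) = deg l
   along the edge il. *)
Lemma uniform_rw_adj_iso (R : rcfType) n (e : rel 'I_n) :
  symmetric e -> nonsingular_graph R e -> uniform_nbr_deg e -> evo_iso (rwmx R e) (adjmx R e).
Proof.
move=> sym nonsing unif.
pose nbr i := xchoose (nbr_of_nonsingular nonsing i).
have e_nbr i : e i (nbr i) := xchooseP (nbr_of_nonsingular nonsing i).
pose y i : R := ((deg e i)%:R ^+ 2 * (deg e (nbr i))%:R)^-1.
have [lam lam_gt0 lam3] :
    exists2 lam : 'I_n -> R, forall i, 0 < lam i & forall i, lam i ^+ 3 = y i.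
  apply: (@fin_all_exists2 _ (fun=> R) (fun _ x => 0 < x) (fun i x => x ^+ 3 = y i)) => i.
  apply: exists_pos_cbrt.
  rewrite invr_gt0 mulr_gt0 ?exprn_gt0 // ltr0n; first exact: deg_gt0 (e_nbr i).
  by apply: (@deg_gt0 _ _ _ i); rewrite sym.
apply: (evo_iso_scale (lam := lam)) => [i | i l]; first by rewrite gt_eqF.
rewrite !mxE; case eil: (e i l); last by rewrite !mul0r mulr0.
have eli : e l i by rewrite sym.
have lam_l : lam l = (deg e i)%:R * lam i ^+ 2.
  apply/eqP; rewrite -(eqrXn2 (_ : 0 < 3)%N)
    ?ltW ?mulr_gt0 ?exprn_gt0 ?ltr0n ?(deg_gt0 eil) //.
  rewrite exprMn -exprM mulnC exprM !lam3 /y.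
  rewrite (unif l (nbr l) i (e_nbr l) eli) (unif i (nbr i) l (e_nbr i) eil).
  by apply/eqP; field; rewrite !(degR_neq0 R eil, degR_neq0 R eli).
by rewrite lam_l mul1r mulr1 mulrA mulVf ?mul1r // (degR_neq0 R eil).
Qed.

Theorem theorem2p3 (R : realType) (n : nat) (e : rel 'I_n) :
  simple_graph e -> connected_graph e -> nonsingular_graph R e ->
  (evo_iso (rwmx R e) (adjmx R e) <-> (regular_graph e \/ biregular_graph e)) /\
  (~ evo_iso (rwmx R e) (adjmx R e) ->
     (forall f, evo_hom (rwmx R e) (adjmx R e) f -> f = (fun _ => 0)) /\
     (forall f, evo_hom (adjmx R e) (rwmx R e) f -> f = (fun _ => 0))).
Proof.
move=> [sym _] conn nonsing.
have iso_uniform : evo_iso (rwmx R e) (adjmx R e) <-> uniform_nbr_deg e.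
  by split; [exact: rw_adj_iso_uniform | exact: uniform_rw_adj_iso].
split.
  rewrite iso_uniform; split; last exact: regular_or_biregular_uniform.
  exact: uniform_regular_or_biregular (nbr_of_nonsingular nonsing).
move=> not_iso; split=> f f_hom.
  by have [|/iso_uniform] := rw_adj_hom_eq0_or_uniform nonsing sym conn f_hom.
by have [|/iso_uniform] := adj_rw_hom_eq0_or_uniform nonsing sym conn f_hom.
Qed.
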